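(* Let $g,h,\lambda_{1,1}$ be fixed parameters, and consider the transformation of triples $(A,B,C)=(\lambda_{1,4}^{(i-1)},\lambda_{1,3}^{(i-1)},\lambda_{1,4}^{(i)})$ of nonzero quantities given by $$A\mapsto C,\qquad B\mapsto \frac{BC+h\lambda_{1,1}}{A},\qquad C\mapsto \frac{C^2}{A}+\frac{h\lambda_{1,1}C}{AB}+\frac{g\lambda_{1,1}}{B}.$$ Then the two functions $$G_\gamma=\frac{C}{A}+\frac{A}{C}+\frac{h\lambda_{1,1}}{BA}+\frac{g\lambda_{1,1}}{BC},\qquad \lambda_{4,4}=\frac{gA}{B}+\frac{hC}{B}$$ are invariant under this transformation.
   Context: This is the action of the Dehn twist around the geodesic $\gamma$ separating the two holes of a Riemann sphere with two holes, each with two bordered cusps ($PIII^{D_6}$ case): $\lambda_{\alpha,\beta}^{(i)}$ denotes the $\lambda$-length of the arc between bordered cusps $\alpha$ and $\beta$ winding $i$ times around the lower hole, $\lambda_{1,1}$ is the $\lambda$-length of the arc from cusp $1$ back to itself, and $g,h$ are $\lambda$-lengths of arcs on the other hole. The claim is an identity of rational functions. *)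

From mathcomp Require Import all_boot all_algebra.
Set Implicit Arguments. Unset Strict Implicit. Unset Printing Implicit Defensive.
Import GRing.Theory.
Local Open Scope ring_scope.

Definition dehn_step (F : fieldType) (g h l11 : F) (t : F * F * F) : F * F * F :=
  let: (A, B, C) := t in
  (C, (B * C + h * l11) / A,
   C ^+ 2 / A + h * l11 * C / (A * B) + g * l11 / B).

Definition G_gamma (F : fieldType) (g h l11 : F) (t : F * F * F) : F :=
  let: (A, B, C) := t in
  C / A + A / C + h * l11 / (B * A) + g * l11 / (B * C).

Definition lambda44 (F : fieldType) (g h l11 : F) (t : F * F * F) : F :=
  let: (A, B, C) := t in g * A / B + h * C / B.

From mathcomp Require Import all_boot all_algebra.
From mathcomp Require Import ring.
Set Implicit Arguments. Unset Strict Implicit. Unset Printing Implicit Defensive.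
Import GRing.Theory.
Local Open Scope ring_scope.

(* The twist acts on the triple through two exchange relations,
   [A B' = B C + h l11] and [A B C' = C^2 B + h l11 C + g l11 A].  Both
   invariants are checked against these relations alone: solving them for
   [B'] and [C'] turns each invariance into an identity of rational
   functions in [A, B, C], whose denominators are nonzero because [B'] and
   [C'] are. *)

Section DehnTwist.

Variables (F : fieldType) (g h l11 : F).

Lemma dehn_step_exchange_mid (A B C : F) :
  A != 0 -> A * (dehn_step g h l11 (A, B, C)).1.2 = B * C + h * l11.
Proof. by move=> nzA /=; field. Qed.

Lemma dehn_step_exchange_last (A B C : F) :
  A != 0 -> B != 0 ->
  A * B * (dehn_step g h l11 (A, B, C)).2
  = C ^+ 2 * B + h * l11 * C + g * l11 * A.
Proof. by move=> nzA nzB /=; field; rewrite nzA nzB. Qed.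

Lemma dehn_stepE (A B C : F) :
  dehn_step g h l11 (A, B, C)
  = (C, (dehn_step g h l11 (A, B, C)).1.2, (dehn_step g h l11 (A, B, C)).2).
Proof. by []. Qed.

Section Exchange.

Variables (A B C B' C' : F).
Hypotheses (nzA : A != 0) (nzB : B != 0) (nzB' : B' != 0).
Hypothesis exB : A * B' = B * C + h * l11.
Hypothesis exC : A * B * C' = C ^+ 2 * B + h * l11 * C + g * l11 * A.

Let B'E : B' = (B * C + h * l11) / A.
Proof. by rewrite -exB mulrC mulKf. Qed.

Let C'E : C' = (C ^+ 2 * B + h * l11 * C + g * l11 * A) / (A * B).
Proof. by rewrite -exC mulrC mulKf // mulf_neq0. Qed.

Let nz_exB : B * C + h * l11 != 0.
Proof. by rewrite -exB mulf_neq0. Qed.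

Lemma lambda44_exchange :
  lambda44 g h l11 (C, B', C') = lambda44 g h l11 (A, B, C).
Proof. by rewrite /= B'E C'E; field; rewrite nzA nzB nz_exB. Qed.

Lemma G_gamma_exchange : C != 0 -> C' != 0 ->
  G_gamma g h l11 (C, B', C') = G_gamma g h l11 (A, B, C).
Proof.
move=> nzC nzC'.
have nz_exC : C ^+ 2 * B + h * l11 * C + g * l11 * A != 0.
  by rewrite -exC !mulf_neq0.
by rewrite /= B'E C'E; field; rewrite nzA nzB nzC nz_exB nz_exC.
Qed.

End Exchange.

End DehnTwist.

Theorem mainTheorem11 (F : fieldType) (g h l11 A B C : F) :
  A != 0 -> B != 0 -> C != 0 ->
  (dehn_step g h l11 (A, B, C)).1.2 != 0 ->
  (dehn_step g h l11 (A, B, C)).2 != 0 ->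
  G_gamma g h l11 (dehn_step g h l11 (A, B, C)) = G_gamma g h l11 (A, B, C) /\
  lambda44 g h l11 (dehn_step g h l11 (A, B, C)) = lambda44 g h l11 (A, B, C).
Proof.
move=> nzA nzB nzC nzB' nzC'.
have exB := dehn_step_exchange_mid g h l11 B C nzA.
have exC := dehn_step_exchange_last g h l11 C nzA nzB.
rewrite dehn_stepE.
split; [exact: G_gamma_exchange | exact: lambda44_exchange].
Qed.
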